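(* Let $\mu$ be a product distribution on $\mathcal{X}^n$ and let $(X_1,\dots,X_n)\sim\mu$. Let $\mathsf{M}$ be any $k$-pass streaming algorithm (possibly using private randomness) with memory size $s$ bits running on the stream $X_1,\dots,X_n$. Then $$MIC(\mathsf{M},\mu)\le 2ksn.$$
   Context: A $k$-pass streaming algorithm $\mathsf{M}$ reads the stream $X_1,\dots,X_n$ in order $k$ times; at every step it uses fresh independent private randomness to move to its next memory state, and every memory state is an $s$-bit string. $\mathsf{M}_{(i,j)}$ denotes the (random) memory state in pass $i\in[k]$ after reading $j$ elements; $\mathsf{M}_{(1,0)}$ is the starting state and $\mathsf{M}_{(i+1,0)}=\mathsf{M}_{(i,n)}$. Write $\mathsf{M}_{(\le i,j)}=(\mathsf{M}_{(1,j)},\dots,\mathsf{M}_{(i,j)})$ (empty when $i=0$). The multi-pass information complexity is $$MIC(\mathsf{M},\mu)=\sum_{i=1}^{k}\sum_{j=1}^n\sum_{\ell=1}^{j}\mathrm I\big(\mathsf{M}_{(i,j)};X_\ell\mid \mathsf{M}_{(\le i,\ell-1)},\mathsf{M}_{(\le i-1,j)}\big)+\sum_{i=1}^{k}\sum_{j=1}^n\sum_{\ell=j+1}^{n}\mathrm I\big(\mathsf{M}_{(i,j)};X_\ell\mid \mathsf{M}_{(\le i-1,\ell-1)},\mathsf{M}_{(\le i-1,j)}\big),$$ where $\mathrm I(\cdot;\cdot\mid\cdot)$ is conditional mutual information and randomness is over $X\sim\mu$ and the algorithm's private randomness. *)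

From HB Require Import structures.
From mathcomp Require Import all_boot all_order all_algebra.
From mathcomp Require Import reals exp.
Set Implicit Arguments. Unset Strict Implicit. Unset Printing Implicit Defensive.
Import Order.TTheory GRing.Theory Num.Theory.
Local Open Scope ring_scope.

Section Info.
Variable R : realType.

Definition log2 (x : R) : R := ln x / ln 2.

Definition is_distr (T : finType) (d : {ffun T -> R}) : Prop :=
  (forall t, 0 <= d t) /\ \sum_(t : T) d t = 1.

Definition prob_ev (Omega : finType) (p : Omega -> R) (E : pred Omega) : R :=
  \sum_(w | E w) p w.

Definition cmi (Omega : finType) (p : Omega -> R)
    (TA TB TC : eqType) (A : Omega -> TA) (B : Omega -> TB) (C : Omega -> TC) : R :=
  \sum_(w : Omega)
     p w * log2 ((prob_ev p (fun w' => [&& A w' == A w, B w' == B w & C w' == C w])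
                  * prob_ev p (fun w' => C w' == C w))
               / (prob_ev p (fun w' => (A w' == A w) && (C w' == C w))
                  * prob_ev p (fun w' => (B w' == B w) && (C w' == C w)))).

(* An outcome is (x, m): x is the stream (X_1,...,X_n) (x j = X_{j+1}), and
   m i j is the memory state after reading element j+1 in pass i+1, i.e.
   m i j = M_(i+1, j+1) (0-based ordinals i : 'I_k, j : 'I_n). *)
Definition outcome (X : finType) (n k s : nat) :=
  ({ffun 'I_n -> X} * {ffun 'I_k -> {ffun 'I_n -> s.-tuple bool}})%type.

(* M_(i,j) in the paper's indexing (1 <= i <= k, 0 <= j <= n):
   the state at global time t = (i-1) n + j; time 0 is the starting state m0,
   so that M_(1,0) = m0 and M_(i+1,0) = M_(i,n). *)
Definition Mst (X : finType) (n k s : nat) (m0 : s.-tuple bool)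
    (w : outcome X n k s) (i j : nat) : s.-tuple bool :=
  match ((i.-1) * n + j)%N with
  | 0 => m0
  | t.+1 =>
      match @insub _ (fun a => (a < k)%N) 'I_k (t %/ n)%N,
            @insub _ (fun a => (a < n)%N) 'I_n (t %% n)%N with
      | Some a, Some b => w.2 a b
      | _, _ => m0
      end
  end.

Definition Mle (X : finType) (n k s : nat) (m0 : s.-tuple bool)
    (w : outcome X n k s) (i j : nat) : seq (s.-tuple bool) :=
  [seq Mst m0 w i' j | i' <- iota 1 i].

Definition Xel (X : finType) (n k s : nat) (l : 'I_n) (w : outcome X n k s) : X :=
  w.1 l.

(* Joint law of the stream and of all memory states: the stream is drawn from
   the product distribution prod_j mu_j, the algorithm starts in m0 and, in
   pass i+1 when reading element j+1, moves from its current state to a new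
   state drawn (with fresh independent randomness) from T i j (state) (X_{j+1}). *)
Definition joint (X : finType) (n k s : nat) (mu : 'I_n -> {ffun X -> R})
    (m0 : s.-tuple bool)
    (T : 'I_k -> 'I_n -> s.-tuple bool -> X -> {ffun s.-tuple bool -> R})
    (w : outcome X n k s) : R :=
  (\prod_(j < n) mu j (w.1 j)) *
  \prod_(i < k) \prod_(j < n) T i j (Mst m0 w i.+1 j) (w.1 j) (w.2 i j).

(* Multi-pass information complexity MIC(M, mu), with the paper's indices
   i = i0+1, j = j0+1, l = l0+1. *)
Definition MIC (X : finType) (n k s : nat) (mu : 'I_n -> {ffun X -> R})
    (m0 : s.-tuple bool)
    (T : 'I_k -> 'I_n -> s.-tuple bool -> X -> {ffun s.-tuple bool -> R}) : R :=
  let p := joint mu m0 T in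
  \sum_(i0 < k) \sum_(j0 < n) \sum_(l0 < n | (l0 <= j0)%N)
     cmi p (fun w => Mst m0 w i0.+1 j0.+1) (Xel l0)
           (fun w => (Mle m0 w i0.+1 l0, Mle m0 w i0 j0.+1))
  + \sum_(i0 < k) \sum_(j0 < n) \sum_(l0 < n | (j0 < l0)%N)
     cmi p (fun w => Mst m0 w i0.+1 j0.+1) (Xel l0)
           (fun w => (Mle m0 w i0 l0, Mle m0 w i0 j0.+1)).

End Info.

From HB Require Import structures.
From mathcomp Require Import all_boot all_order all_algebra.
From mathcomp Require Import reals exp.
From mathcomp Require Import zify ring lra.
Set Implicit Arguments. Unset Strict Implicit. Unset Printing Implicit Defensive.
Import Order.TTheory GRing.Theory Num.Theory.
Local Open Scope ring_scope.

(* Fix the state M_(i,j).  On a product input, two runs that agree on the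
   states conditioned upon in the l-th term of MIC can be cut and pasted into
   each other without changing the product of their weights; hence, given those
   states, what happens on one side of them is independent of what happens on
   the other.  So the conditioning of the l-th term may be enlarged by the
   stream elements and states lying between it and l, which makes the
   conditionings G_l nested in l.  The chain rule then bounds the l-th term by
   H(M_(i,j) | G_l) - H(M_(i,j) | G_(l+1)), and each of the two sums over l
   telescopes to at most H(M_(i,j)) <= s. *)

Section Log2.
Variable R : realType.

Lemma ln2_gt0 : 0 < ln (2 : R).
Proof. by apply: ln_gt0; rewrite ltr1n. Qed.

Lemma ln_le_subr1 (x : R) : 0 < x -> ln x <= x - 1.
Proof. by move=> x0; have := @le_ln1Dx R (x - 1); rewrite addrCA subrr addr0; apply; lra. Qed.

Lemma log2_1 : log2 1 = 0 :> R.
Proof. by rewrite /log2 ln1 mul0r. Qed.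

Lemma log2M (x y : R) : 0 < x -> 0 < y -> log2 (x * y) = log2 x + log2 y.
Proof. by move=> x0 y0; rewrite /log2 lnM ?posrE // mulrDl. Qed.

Lemma log2V (x : R) : 0 < x -> log2 x^-1 = - log2 x.
Proof. by move=> x0; rewrite /log2 lnV ?posrE // mulNr. Qed.

Lemma ler_log2 (x y : R) : 0 < x -> 0 < y -> (log2 x <= log2 y) = (x <= y).
Proof. by move=> x0 y0; rewrite /log2 ler_pM2r ?invr_gt0 ?ln2_gt0 // ler_ln. Qed.

Lemma log2_natX2 (s : nat) : log2 (2 ^ s)%:R = s%:R :> R.
Proof.
rewrite natrX /log2 lnXn ?ltr0n // -[ln 2 *+ s]mulr_natr mulrAC divff ?mul1r //.
by rewrite gt_eqF // ln2_gt0.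
Qed.

End Log2.

Section Entropy.
Variables (R : realType) (Omega : finType) (p : Omega -> R).

Definition pr_eq (T : eqType) (f : Omega -> T) (w : Omega) : R :=
  prob_ev p (fun w' => f w' == f w).

Definition entropy (T : eqType) (f : Omega -> T) : R :=
  - \sum_w p w * log2 (pr_eq f w).

Definition centropy (TA TG : eqType) (A : Omega -> TA) (G : Omega -> TG) : R :=
  entropy (fun w => (A w, G w)) - entropy G.

Definition cond_indep (TF TD TC : eqType)
    (F : Omega -> TF) (D : Omega -> TD) (C : Omega -> TC) : Prop :=
  forall w, pr_eq (fun w => (F w, (C w, D w))) w * pr_eq C w =
            pr_eq (fun w => (F w, C w)) w * pr_eq (fun w => (C w, D w)) w.

Lemma prob_evE (E : pred Omega) : prob_ev p E = \sum_w (E w)%:R * p w.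
Proof.
rewrite /prob_ev big_mkcond; apply: eq_bigr => w _.
by case: (E w); rewrite ?mul1r ?mul0r.
Qed.

Lemma pr_eqE (T : eqType) (f : Omega -> T) w :
  pr_eq f w = \sum_u (f u == f w)%:R * p u.
Proof. exact: prob_evE. Qed.

Lemma eq_pr_eq (T T' : eqType) (f : Omega -> T) (g : Omega -> T') :
  (forall w w', (f w' == f w) = (g w' == g w)) -> pr_eq f =1 pr_eq g.
Proof. by move=> fg w; apply: eq_bigl => w'; rewrite fg. Qed.

Lemma eq_entropy (T T' : eqType) (f : Omega -> T) (g : Omega -> T') :
  (forall w w', (f w' == f w) = (g w' == g w)) -> entropy f = entropy g.
Proof.
by move=> fg; congr (- _); apply: eq_bigr => w _; rewrite (eq_pr_eq fg).
Qed.

Hypothesis p_ge0 : forall w, 0 <= p w.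
Hypothesis p_sum1 : \sum_w p w = 1.

Lemma p_eq0 w : ~~ (0 < p w) -> p w = 0.
Proof. by move=> pw; apply/eqP; rewrite eq_le p_ge0 andbT leNgt. Qed.

Lemma pr_eq_ge (T : eqType) (f : Omega -> T) w : p w <= pr_eq f w.
Proof.
rewrite /pr_eq /prob_ev (bigD1 w) //= lerDl.
by apply: sumr_ge0 => u _; apply: p_ge0.
Qed.

Lemma pr_eq_ge0 (T : eqType) (f : Omega -> T) w : 0 <= pr_eq f w.
Proof. exact: le_trans (p_ge0 w) (pr_eq_ge f w). Qed.

Lemma pr_eq_gt0 (T : eqType) (f : Omega -> T) w : 0 < p w -> 0 < pr_eq f w.
Proof. by move=> pw; apply: lt_le_trans pw (pr_eq_ge f w). Qed.

Lemma pr_eq_pair_le (TA TG : eqType) (A : Omega -> TA) (G : Omega -> TG) w :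
  pr_eq (fun w => (A w, G w)) w <= pr_eq G w.
Proof.
rewrite !pr_eqE; apply: ler_sum => u _; rewrite xpair_eqE.
by case: (A u == A w); case: (G u == G w); rewrite ?mul1r ?mul0r ?p_ge0.
Qed.

Lemma sum_class_le1 (T : eqType) (f : Omega -> T) (t : T) :
  \sum_w (f w == t)%:R * (p w / pr_eq f w) <= 1.
Proof.
have -> : \sum_w (f w == t)%:R * (p w / pr_eq f w) =
    prob_ev p (fun w => f w == t) / prob_ev p (fun w => f w == t).
  rewrite [in X in X / _]prob_evE mulr_suml; apply: eq_bigr => w _.
  by case: eqP => [<-|_]; rewrite ?mul0r // mulrA.
set P := prob_ev _ _; have [->|P0] := eqVneq P 0; by [rewrite mul0r ler01 | rewrite divff].
Qed.

Lemma sum_log2_le (f : Omega -> R) (c : R) : 0 < c ->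
  (forall w, 0 < p w -> 0 < f w) -> \sum_w p w * f w <= c ->
  \sum_w p w * log2 (f w) <= log2 c.
Proof.
move=> c0 f_gt0 sum_f.
have ln_le w : p w * ln (f w) <= p w * (ln c + f w / c - 1).
  have [pw|/p_eq0->] := boolP (0 < p w); last by rewrite !mul0r.
  rewrite ler_wpM2l ?p_ge0 //.
  have fc : 0 < f w / c by rewrite divr_gt0 ?f_gt0.
  by move: (ln_le_subr1 fc); rewrite ln_div ?posrE ?f_gt0 //; lra.
have -> : \sum_w p w * log2 (f w) = (\sum_w p w * ln (f w)) / ln 2.
  by rewrite mulr_suml; apply: eq_bigr => w _; rewrite /log2 mulrA.
rewrite /log2 ler_pM2r ?invr_gt0 ?ln2_gt0 //.
apply: le_trans (ler_sum _ (fun w _ => ln_le w)) _.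
have -> : \sum_w p w * (ln c + f w / c - 1) =
    ln c * \sum_w p w + (\sum_w p w * f w) / c - \sum_w p w.
  rewrite mulr_sumr mulr_suml -big_split -sumrB /=.
  by apply: eq_bigr => w _; ring.
have : (\sum_w p w * f w) / c <= 1 by rewrite ler_pdivrMr ?mul1r.
by rewrite p_sum1; lra.
Qed.

Lemma cmiE_ratio (TA TB TC : eqType)
    (A : Omega -> TA) (B : Omega -> TB) (C : Omega -> TC) :
  cmi p A B C = \sum_w p w *
    log2 (pr_eq (fun w => (A w, (B w, C w))) w * pr_eq C w /
          (pr_eq (fun w => (A w, C w)) w * pr_eq (fun w => (B w, C w)) w)).
Proof. by []. Qed.

Lemma pr_eq_congr (T : eqType) (f : Omega -> T) w w' :
  f w = f w' -> pr_eq f w = pr_eq f w'.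
Proof. by rewrite /pr_eq => ->. Qed.

Lemma eq_sum_supp (F G : Omega -> R) :
  (forall w, 0 < p w -> F w = G w) -> \sum_w p w * F w = \sum_w p w * G w.
Proof.
move=> FG; apply: eq_bigr => w _.
by have [/FG->|/p_eq0->] := boolP (0 < p w); rewrite ?mul0r.
Qed.

Lemma cmiE (TA TB TC : eqType)
    (A : Omega -> TA) (B : Omega -> TB) (C : Omega -> TC) :
  cmi p A B C = entropy (fun w => (A w, C w)) + entropy (fun w => (B w, C w))
              - entropy (fun w => (A w, (B w, C w))) - entropy C.
Proof.
rewrite cmiE_ratio /entropy (eq_sum_supp (G := fun w =>
  log2 (pr_eq (fun w => (A w, (B w, C w))) w) + log2 (pr_eq C w)
  - log2 (pr_eq (fun w => (A w, C w)) w) - log2 (pr_eq (fun w => (B w, C w)) w))).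
  by rewrite -!sumrN -!big_split /=; apply: eq_bigr => w _; ring.
by move=> w pw; rewrite log2M ?log2V ?log2M ?(mulr_gt0, invr_gt0, pr_eq_gt0) //; ring.
Qed.

Lemma sum_cross_class_le (TA TB TC : eqType)
    (A : Omega -> TA) (B : Omega -> TB) (C : Omega -> TC) (u v : Omega) :
  \sum_w ((A u, C u) == (A w, C w))%:R * ((B v, C v) == (B w, C w))%:R *
         (p w / (pr_eq (fun w => (A w, (B w, C w))) w * pr_eq C w))
  <= (C v == C u)%:R / pr_eq C u.
Proof.
pose ABC w := (A w, (B w, C w)).
have [Cvu|Cvu] := eqVneq (C v) (C u); last first.
  rewrite mul0r big1 // => w _.
  case: eqP => [[_ Cu]|_]; case: eqP => [[_ Cv]|_]; rewrite /= ?(mul0r, mulr0) //.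
  by case/eqP: Cvu; rewrite Cv -Cu.
rewrite [leLHS](_ : _ =
  (\sum_w (ABC w == (A u, (B v, C u)))%:R * (p w / pr_eq ABC w)) / pr_eq C u); last first.
  rewrite mulr_suml; apply: eq_bigr => w _.
  have [[Aw Bw Cw]|neq] := eqVneq (ABC w) (A u, (B v, C u)).
    rewrite Aw Bw Cw Cvu (pr_eq_congr (f := C) Cw) !eqxx invfM /=; ring.
  rewrite /= mul0r; case: eqP => [[Au Cu]|_]; case: eqP => [[Bv Cv]|_];
    rewrite /= ?(mul0r, mulr0) //.
  by case/eqP: neq; rewrite /ABC -Au -Bv -Cu.
apply: ler_wpM2r; first by rewrite invr_ge0 pr_eq_ge0.
exact: sum_class_le1.
Qed.

Lemma sum_cmi_ratio_le1 (TA TB TC : eqType)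
    (A : Omega -> TA) (B : Omega -> TB) (C : Omega -> TC) :
  \sum_w p w * (pr_eq (fun w => (A w, C w)) w * pr_eq (fun w => (B w, C w)) w /
                (pr_eq (fun w => (A w, (B w, C w))) w * pr_eq C w)) <= 1.
Proof.
pose W w := p w / (pr_eq (fun w => (A w, (B w, C w))) w * pr_eq C w).
pose I u v w := ((A u, C u) == (A w, C w))%:R * ((B v, C v) == (B w, C w))%:R : R.
have -> : \sum_w p w * (pr_eq (fun w => (A w, C w)) w * pr_eq (fun w => (B w, C w)) w /
      (pr_eq (fun w => (A w, (B w, C w))) w * pr_eq C w)) =
    \sum_u \sum_v p u * p v * \sum_w I u v w * W w.
  transitivity (\sum_w \sum_u \sum_v p u * p v * (I u v w * W w)).
    apply: eq_bigr => w _; rewrite mulrCA (pr_eqE (fun w => (A w, C w))).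
    rewrite (pr_eqE (fun w => (B w, C w))) big_distrlr mulr_suml /=.
    by apply: eq_bigr => u _; rewrite mulr_suml; apply: eq_bigr => v _; rewrite /I /W; ring.
  rewrite exchange_big; apply: eq_bigr => u _; rewrite exchange_big.
  by apply: eq_bigr => v _; rewrite mulr_sumr.
apply: (le_trans (y := \sum_u \sum_v p u * p v * ((C v == C u)%:R / pr_eq C u))).
  apply: ler_sum => u _; apply: ler_sum => v _.
  by apply: ler_wpM2l (sum_cross_class_le A B C u v); rewrite mulr_ge0.
rewrite -[leRHS]p_sum1; apply: ler_sum => u _.
have -> : \sum_v p u * p v * ((C v == C u)%:R / pr_eq C u) =
    p u * (pr_eq C u / pr_eq C u).
  by rewrite {2}pr_eqE mulr_suml mulr_sumr; apply: eq_bigr => v _; ring.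
have [->|PC0] := eqVneq (pr_eq C u) 0; first by rewrite mul0r mulr0.
by rewrite divff // mulr1.
Qed.

Lemma cmi_ge0 (TA TB TC : eqType)
    (A : Omega -> TA) (B : Omega -> TB) (C : Omega -> TC) : 0 <= cmi p A B C.
Proof.
have -> : cmi p A B C = - \sum_w p w *
    log2 (pr_eq (fun w => (A w, C w)) w * pr_eq (fun w => (B w, C w)) w /
          (pr_eq (fun w => (A w, (B w, C w))) w * pr_eq C w)).
  rewrite cmiE_ratio -sumrN; apply: eq_bigr => w _; rewrite -mulrN.
  have [pw|/p_eq0->] := boolP (0 < p w); last by rewrite !mul0r.
  by rewrite -log2V ?invf_div // ?(mulr_gt0, invr_gt0, pr_eq_gt0).
rewrite oppr_ge0 -[leRHS](@log2_1 R).
apply: sum_log2_le (sum_cmi_ratio_le1 A B C) => // w pw.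
by rewrite ?(mulr_gt0, invr_gt0, pr_eq_gt0).
Qed.

Lemma cmiE_centropy (TA TB TC : eqType)
    (A : Omega -> TA) (B : Omega -> TB) (C : Omega -> TC) :
  cmi p A B C = centropy A C - centropy A (fun w => (B w, C w)).
Proof. by rewrite cmiE /centropy /=; ring. Qed.

Lemma eq_cmi (TA TB TC TB' TC' : eqType) (A : Omega -> TA)
    (B : Omega -> TB) (C : Omega -> TC) (B' : Omega -> TB') (C' : Omega -> TC') :
  (forall w w', (B w' == B w) = (B' w' == B' w)) ->
  (forall w w', (C w' == C w) = (C' w' == C' w)) ->
  cmi p A B C = cmi p A B' C'.
Proof.
move=> BB' CC'; rewrite !cmiE (eq_entropy CC').
rewrite (@eq_entropy _ _ (fun w => (A w, C w)) (fun w => (A w, C' w))); last first.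
  by move=> w w'; rewrite !xpair_eqE CC'.
rewrite (@eq_entropy _ _ (fun w => (B w, C w)) (fun w => (B' w, C' w))); last first.
  by move=> w w'; rewrite !xpair_eqE BB' CC'.
rewrite (@eq_entropy _ _ (fun w => (A w, (B w, C w))) (fun w => (A w, (B' w, C' w)))) //.
by move=> w w'; rewrite !xpair_eqE BB' CC'.
Qed.

Lemma centropyE (TA TG : eqType) (A : Omega -> TA) (G : Omega -> TG) :
  centropy A G = \sum_w p w * log2 (pr_eq G w / pr_eq (fun w => (A w, G w)) w).
Proof.
rewrite /centropy /entropy opprK addrC -sumrB; apply: eq_bigr => w _.
have [pw|/p_eq0->] := boolP (0 < p w); last by rewrite !mul0r subrr.
by rewrite -mulrBr log2M ?log2V ?(invr_gt0, pr_eq_gt0).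
Qed.

Lemma centropy_ge0 (TA TG : eqType) (A : Omega -> TA) (G : Omega -> TG) :
  0 <= centropy A G.
Proof.
rewrite centropyE; apply: sumr_ge0 => w _.
have [pw|/p_eq0->] := boolP (0 < p w); last by rewrite mul0r.
rewrite mulr_ge0 ?p_ge0 // -(log2_1 R) ler_log2 ?(divr_gt0, pr_eq_gt0) //.
by rewrite ler_pdivlMr ?pr_eq_gt0 // mul1r pr_eq_pair_le.
Qed.

Lemma sum_centropy_ratio_le_card (TA : finType) (TG : eqType)
    (A : Omega -> TA) (G : Omega -> TG) :
  \sum_w p w * (pr_eq G w / pr_eq (fun w => (A w, G w)) w) <= #|TA|%:R.
Proof.
pose AG w := (A w, G w).
have -> : \sum_w p w * (pr_eq G w / pr_eq AG w) =
    \sum_u p u * \sum_(a : TA) \sum_w (AG w == (a, G u))%:R * (p w / pr_eq AG w).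
  transitivity (\sum_w \sum_u p u * ((G w == G u)%:R * (p w / pr_eq AG w))).
    apply: eq_bigr => w _; rewrite mulrCA pr_eqE mulr_suml.
    by apply: eq_bigr => u _; rewrite eq_sym; ring.
  rewrite exchange_big; apply: eq_bigr => u _; rewrite -mulr_sumr exchange_big.
  congr (_ * _); apply: eq_bigr => w _.
  rewrite (bigD1 (A w)) //= big1 ?addr0 => [|a Aw]; first by rewrite /AG xpair_eqE eqxx.
  by rewrite /AG xpair_eqE eq_sym (negbTE Aw) mul0r.
apply: (le_trans (y := \sum_u p u * #|TA|%:R)); last by rewrite -mulr_suml p_sum1 mul1r.
apply: ler_sum => u _; apply: ler_wpM2l; first exact: p_ge0.
apply: le_trans (ler_sum _ (fun a _ => sum_class_le1 AG (a, G u))) _.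
by rewrite sumr_const.
Qed.

Lemma centropy_le_log2_card (TA : finType) (TG : eqType)
    (A : Omega -> TA) (G : Omega -> TG) :
  centropy A G <= log2 #|TA|%:R.
Proof.
have [w0 _] : exists w0 : Omega, true.
  case: (pickP (@predT Omega)) => [w0 _|Omega0]; first by exists w0.
  by move: p_sum1; rewrite (eq_bigl xpred0) // big_pred0_eq => /eqP; rewrite eq_sym oner_eq0.
have TA_gt0 : (0 < #|TA|)%N by apply/card_gt0P; exists (A w0).
rewrite centropyE; apply: sum_log2_le (sum_centropy_ratio_le_card A G).
  by rewrite ltr0n.
by move=> w pw; rewrite divr_gt0 ?pr_eq_gt0.
Qed.

Lemma entropy_cond_indep (TF TD TC : eqType)
    (F : Omega -> TF) (D : Omega -> TD) (C : Omega -> TC) :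
  cond_indep F D C ->
  entropy (fun w => (F w, (C w, D w))) + entropy C =
  entropy (fun w => (F w, C w)) + entropy (fun w => (C w, D w)).
Proof.
move=> FDC; rewrite /entropy -!opprD -!big_split /=; congr (- _).
apply: eq_bigr => w _; rewrite -!mulrDr.
have [pw|/p_eq0->] := boolP (0 < p w); last by rewrite !mul0r.
by rewrite -!log2M ?pr_eq_gt0 // FDC.
Qed.

Lemma cmi_cond_indep (TA TB TC TD : eqType) (A : Omega -> TA) (B : Omega -> TB)
    (C : Omega -> TC) (D : Omega -> TD) :
  cond_indep A D C -> cond_indep B D C -> cond_indep (fun w => (A w, B w)) D C ->
  cmi p A B C = cmi p A B (fun w => (C w, D w)).
Proof.
move=> /entropy_cond_indep ADC /entropy_cond_indep BDC /entropy_cond_indep ABDC.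
rewrite !cmiE.
rewrite (@eq_entropy _ _ (fun w => (A w, (B w, (C w, D w))))
                         (fun w => ((A w, B w), (C w, D w)))); last first.
  by move=> w w'; rewrite !xpair_eqE !andbA.
rewrite (@eq_entropy _ _ (fun w => (A w, (B w, C w))) (fun w => ((A w, B w), C w))).
  by lra.
by move=> w w'; rewrite !xpair_eqE !andbA.
Qed.

Lemma sum_cmi_le_log2_card (TA : finType) (TB TG TM : eqType) (A : Omega -> TA)
    (B : nat -> Omega -> TB) (G : nat -> Omega -> TG) (M : nat -> Omega -> TM)
    (lo hi : nat) :
  (lo <= hi)%N ->
  (forall l, (lo <= l < hi)%N -> forall w w', (G l.+1 w' == G l.+1 w) =
     ((M l w', (B l w', G l w')) == (M l w, (B l w, G l w)))) ->
  \sum_(lo <= l < hi) cmi p A (B l) (G l) <= log2 #|TA|%:R.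
Proof.
move=> lo_hi G_succ.
pose h l := centropy A (G l).
have step l : (lo <= l < hi)%N -> cmi p A (B l) (G l) <= h l - h l.+1.
  move=> l_in.
  have -> : h l.+1 = centropy A (fun w => (M l w, (B l w, G l w))).
    rewrite /h /centropy; congr (_ - _); apply: eq_entropy => w w'.
      by rewrite !xpair_eqE G_succ.
    exact: G_succ.
  have := cmi_ge0 A (M l) (fun w => (B l w, G l w)).
  by rewrite !cmiE_centropy /h /=; lra.
apply: (le_trans (y := \sum_(lo <= l < hi) (h l - h l.+1))).
  by rewrite big_nat [leRHS]big_nat; apply: ler_sum => l; apply: step.
rewrite (telescope_sumr_eq (fun l => - h l)) // => [|l _]; last by rewrite opprK addrC.
by have := centropy_ge0 A (G hi); have := centropy_le_log2_card A (G lo); rewrite /h; lra.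
Qed.

End Entropy.

Section Swap.
Variables (R : realType) (Omega : finType) (q : Omega -> R).

(* Both sides of [cond_indep] are sums over pairs (w1, w2); [swap] induces a
   weight-preserving involution between the pairs counted on the two sides. *)
Lemma cond_indep_swap (TF TD TC : eqType) (F : Omega -> TF) (D : Omega -> TD)
    (C : Omega -> TC) (swap : Omega -> Omega -> Omega) :
  (forall w1 w2, C w1 = C w2 -> [/\ swap (swap w1 w2) (swap w2 w1) = w1,
      q w1 * q w2 = q (swap w1 w2) * q (swap w2 w1),
      F (swap w1 w2) = F w1, D (swap w1 w2) = D w2 & C (swap w1 w2) = C w1]) ->
  cond_indep q F D C.
Proof.
move=> hswap w.
pose h (j : Omega * Omega) :=
  if C j.1 == C j.2 then (swap j.1 j.2, swap j.2 j.1) else j.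
have h_inv : involutive h.
  case=> w1 w2; have [e|ne] := eqVneq (C w1) (C w2).
    have [i1 _ _ _ c1] := hswap w1 w2 e; have [i2 _ _ _ c2] := hswap w2 w1 (esym e).
    by rewrite /h /= e eqxx /= c1 c2 e eqxx /= i1 i2.
  by rewrite /h /= (negbTE ne) /= (negbTE ne).
rewrite /pr_eq /prob_ev !big_distrlr /= !pair_big_dep /=.
rewrite [RHS](reindex_inj (inv_inj h_inv)) /=.
apply: eq_big => [[w1 w2]|[w1 w2]] /=.
  rewrite /h /=; have [e|ne] := eqVneq (C w1) (C w2) => /=.
    have [_ _ f1 d1 c1] := hswap w1 w2 e; have [_ _ _ d2 c2] := hswap w2 w1 (esym e).
    rewrite f1 c1 c2 d2 !xpair_eqE e.
    by case: (F w1 == F w); case: (C w2 == C w); case: (D w1 == D w).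
  rewrite !xpair_eqE; apply/idP/idP.
    by move=> /andP[/and3P[_ /eqP e1 _] /eqP e2]; case/eqP: ne; rewrite e1 e2.
  by move=> /and3P[/andP[_ /eqP e1] /eqP e2 _]; case/eqP: ne; rewrite e1 e2.
case/andP => /eqP [_ e1 _] /eqP e2.
have e : C w1 = C w2 by rewrite e1 e2.
by rewrite /h /= e eqxx /=; have [_ hq _ _ _] := hswap w1 w2 e.
Qed.

End Swap.

Lemma big_ord_mid (R : Type) (idx : R) (op : Monoid.law idx) (m lo hi : nat)
    (F : nat -> R) :
  (hi <= m)%N -> \big[op/idx]_(l < m | (lo <= l < hi)%N) F l = \big[op/idx]_(lo <= l < hi) F l.
Proof.
move=> hi_le; rewrite big_geq_mkord (big_ord_widen_cond _ _ _ hi_le).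
by apply: eq_bigl => l.
Qed.

Section Cells.
Variables (n k : nat).

Local Notation cell := ('I_k * 'I_n)%type.

Definition time (c : cell) : nat := (c.1 * n + c.2)%N.

Lemma cell_divmod (a b : nat) : (b < n)%N ->
  ((a * n + b) %/ n = a /\ (a * n + b) %% n = b)%N.
Proof.
move=> b_lt; have n_gt0 : (0 < n)%N by apply: leq_ltn_trans b_lt.
by rewrite divnMDl // divn_small ?addn0 // modnMDl modn_small.
Qed.

Lemma time_inj : injective time.
Proof.
move=> [a b] [a' b']; rewrite /time /= => e.
have [d m] := cell_divmod a (ltn_ord b); have [d' m'] := cell_divmod a' (ltn_ord b').
by congr (_, _); apply: val_inj; [rewrite /= -d -d' e | rewrite /= -m -m' e].
Qed.

Lemma time_lt (c : cell) : (time c < k * n)%N.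
Proof. rewrite /time; have := ltn_ord c.2; have := ltn_ord c.1; nia. Qed.

Lemma time_surj (t : nat) : (t < k * n)%N -> exists c : cell, t = time c.
Proof.
move=> t_lt; have n_gt0 : (0 < n)%N by case: n t_lt => //; rewrite muln0.
have a_lt : (t %/ n < k)%N by rewrite ltn_divLR.
by exists (Ordinal a_lt, Ordinal (ltn_pmod t n_gt0)); rewrite /time /= -divn_eq.
Qed.

Lemma ltn_time (a b a' b' : nat) : (b < n)%N -> (b' < n)%N ->
  (a * n + b < a' * n + b')%N = (a < a')%N || ((a == a') && (b < b'))%N.
Proof.
move=> b_lt b'_lt; apply/idP/idP.
- move=> lt; case: (ltngtP a a') => //= [gt|eq]; last by subst; lia.
  have : (a'.+1 * n <= a * n)%N by rewrite leq_mul2r gt orbT.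
  nia.
- case/orP => [lt|/andP[/eqP-> lt]]; last by lia.
  have : (a.+1 * n <= a' * n)%N by rewrite leq_mul2r lt orbT.
  nia.
Qed.

End Cells.

Section Model.
Variables (R : realType) (X : finType) (n k s : nat).
Variables (mu : 'I_n -> {ffun X -> R}) (m0 : s.-tuple bool).
Variable T : 'I_k -> 'I_n -> s.-tuple bool -> X -> {ffun s.-tuple bool -> R}.
Hypothesis mu_distr : forall j, is_distr (mu j).
Hypothesis T_distr : forall i j st x, is_distr (T i j st x).

Local Notation Om := (outcome X n k s).
Local Notation St := (s.-tuple bool).
Local Notation cell := ('I_k * 'I_n)%type.
Local Notation time := (@time n k).

Definition state (w : Om) (t : nat) : St :=
  match t with
  | 0 => m0
  | t.+1 =>
      match @insub _ (fun a => (a < k)%N) 'I_k (t %/ n)%N,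
            @insub _ (fun a => (a < n)%N) 'I_n (t %% n)%N with
      | Some a, Some b => w.2 a b
      | _, _ => m0
      end
  end.

Arguments state : simpl never.

Lemma Mst_state w i j : Mst m0 w i j = state w (i.-1 * n + j).
Proof. by []. Qed.

Lemma Mle_state w i j : Mle m0 w i j = [seq state w (i'.-1 * n + j) | i' <- iota 1 i].
Proof. by []. Qed.

Lemma state_cell w (c : cell) : state w (time c).+1 = w.2 c.1 c.2.
Proof.
case: c => a b; rewrite /state /time /=.
have [-> ->] := cell_divmod a (ltn_ord b).
case: insubP => [a' _ /val_inj->|]; last by rewrite ltn_ord.
by case: insubP => [b' _ /val_inj->|]; last by rewrite ltn_ord.
Qed.

Definition set_cell (w : Om) (c : cell) (v : St) : Om :=
  (w.1, [ffun a => [ffun b => if (a, b) == c then v else w.2 a b]]).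

Lemma state_set_cell w c v t :
  state (set_cell w c v) t = if t == (time c).+1 then v else state w t.
Proof.
case: t => [|t]; rewrite /state //= eqSS.
case: insubP => [a _ a_t|a_t]; last first.
  by case: eqP => // t_c; move: a_t; rewrite t_c (cell_divmod _ (ltn_ord c.2)).1 ltn_ord.
case: insubP => [b _ b_t|]; last first.
  have n_gt0 : (0 < n)%N by apply: leq_ltn_trans (ltn_ord c.2).
  by rewrite ltn_pmod.
rewrite !ffunE; congr (if _ then _ else _).
apply/eqP/eqP => [<-|t_c]; first by rewrite /time /= a_t b_t -divn_eq.
by apply: (@time_inj n k); rewrite -t_c /time /= a_t b_t -divn_eq.
Qed.

Lemma state_set_cell_le w c v t : (t <= time c)%N -> state (set_cell w c v) t = state w t.
Proof. by move=> t_le; rewrite state_set_cell ltn_eqF. Qed.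

Lemma set_cellK w c : set_cell w c (w.2 c.1 c.2) = w.
Proof.
case: w => x m; congr (_, _); apply/ffunP => a; rewrite ffunE; apply/ffunP => b.
by rewrite !ffunE; case: eqP => // <-.
Qed.

Lemma set_cell_set_cell w c v v' : set_cell (set_cell w c v) c v' = set_cell w c v'.
Proof.
congr (_, _); apply/ffunP => a; rewrite !ffunE; apply/ffunP => b.
by rewrite !ffunE; case: eqP.
Qed.

Lemma set_cell_cell w c v : (set_cell w c v).2 c.1 c.2 = v.
Proof. by rewrite !ffunE -surjective_pairing eqxx. Qed.

Lemma sum_set_cell (G : Om -> R) (c : cell) (v0 : St) :
  \sum_w G w = \sum_(w : Om) (w.2 c.1 c.2 == v0)%:R * \sum_v G (set_cell w c v).
Proof.
rewrite (partition_big (fun w : Om => w.2 c.1 c.2) xpredT) //=.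
rewrite (eq_bigr (fun w : Om => \sum_v (w.2 c.1 c.2 == v0)%:R * G (set_cell w c v)));
  last by move=> w _; rewrite mulr_sumr.
rewrite [RHS]exchange_big; apply: eq_bigr => v _.
rewrite (reindex_onto (fun w => set_cell w c v) (fun w => set_cell w c v0)) /=; last first.
  by move=> w /eqP w_c; rewrite set_cell_set_cell -w_c set_cellK.
rewrite big_mkcond /=; apply: eq_bigr => w _.
rewrite set_cell_cell eqxx set_cell_set_cell mulr_natl mulrb.
have -> : (set_cell w c v0 == w) = (w.2 c.1 c.2 == v0).
  apply/eqP/eqP => [<-|w_c]; first by rewrite set_cell_cell.
  by rewrite -w_c set_cellK.
by [].
Qed.

Definition stream_weight (w : Om) : R := \prod_j mu j (w.1 j).

Definition step_weight (c : cell) (w : Om) : R :=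
  T c.1 c.2 (state w (time c)) (w.1 c.2) (state w (time c).+1).

Lemma jointE w : joint mu m0 T w = stream_weight w * \prod_c step_weight c w.
Proof.
rewrite /joint pair_big /=; congr (_ * _); apply: eq_bigr => [[a b]] _ /=.
by rewrite /step_weight state_cell.
Qed.

Lemma joint_ge0 w : 0 <= joint mu m0 T w.
Proof.
apply: mulr_ge0; apply: prodr_ge0 => i _; first by case: (mu_distr i).
by apply: prodr_ge0 => j _; case: (T_distr i j (Mst m0 w i.+1 j) (w.1 j)).
Qed.

(* The law of the stream and of the states up to time [t], the cells of later
   times being pinned to [m0]. *)
Definition blank_from (t : nat) (w : Om) : bool :=
  [forall c : cell, (t <= time c)%N ==> (w.2 c.1 c.2 == m0)].

Definition prefix_weight (t : nat) (w : Om) : R :=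
  (blank_from t w)%:R * stream_weight w *
  \prod_(c : cell | (time c < t)%N) step_weight c w.

Definition prefix_determined (T' : Type) (t : nat) (F : Om -> T') : Prop :=
  forall w c v, (t <= time c)%N -> F (set_cell w c v) = F w.

Lemma prefix_weight_full w : prefix_weight (k * n) w = joint mu m0 T w.
Proof.
rewrite jointE /prefix_weight.
have -> : blank_from (k * n) w.
  by apply/forallP => c; apply/implyP; rewrite leqNgt time_lt.
by rewrite mul1r; congr (_ * _); apply: eq_bigl => c; rewrite time_lt.
Qed.

Lemma blank_from_set_cell w c v :
  blank_from (time c).+1 (set_cell w c v) = blank_from (time c).+1 w.
Proof.
apply: eq_forallb => c'; case: leqP => //= lt_c'.
rewrite !ffunE -surjective_pairing; have [c'c|//] := eqVneq c' c.
by move: lt_c'; rewrite c'c ltnn.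
Qed.

Lemma blank_fromS w c :
  blank_from (time c) w = blank_from (time c).+1 w && (w.2 c.1 c.2 == m0).
Proof.
apply/forallP/andP => [blank|[/forallP blank /eqP w_c] c'].
  split; last by have /implyP := blank c; apply.
  by apply/forallP => c'; apply/implyP => lt_c'; apply: (implyP (blank c')); apply: ltnW.
apply/implyP; rewrite leq_eqVlt => /orP[/eqP/time_inj<-|lt_c']; first by rewrite w_c.
exact: (implyP (blank c')).
Qed.

Lemma prod_step_weight_set_cell w c v :
  \prod_(c' : cell | (time c' < (time c).+1)%N) step_weight c' (set_cell w c v) =
  (\prod_(c' : cell | (time c' < time c)%N) step_weight c' w) *
  T c.1 c.2 (state w (time c)) (w.1 c.2) v.
Proof.
rewrite (bigD1 c) //= mulrC; congr (_ * _); last first.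
  by rewrite /step_weight state_set_cell_le // state_set_cell eqxx.
rewrite (eq_bigl (fun c' => time c' < time c)%N) => [|c'].
  by apply: eq_bigr => c' lt_c'; rewrite /step_weight !state_set_cell_le // ltnW.
rewrite ltnS leq_eqVlt; case: (eqVneq c' c) => [->|ne]; first by rewrite ltnn eqxx.
by rewrite (inj_eq (@time_inj n k)) (negbTE ne) andbT.
Qed.

Lemma prob_ev_prefix_weightS (E : pred Om) (t0 t : nat) :
  prefix_determined t0 E -> (t0 <= t)%N -> (t < k * n)%N ->
  prob_ev (prefix_weight t.+1) E = prob_ev (prefix_weight t) E.
Proof.
move=> E_det t0_le t_lt; have [c t_c] := time_surj t_lt; subst t.
rewrite !prob_evE (sum_set_cell _ c m0); apply: eq_bigr => w _.
pose P := \prod_(c' : cell | (time c' < time c)%N) step_weight c' w.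
rewrite (eq_bigr (fun v => (E w)%:R * (blank_from (time c).+1 w)%:R * stream_weight w * P *
                           T c.1 c.2 (state w (time c)) (w.1 c.2) v)); last first.
  move=> v _ /=; rewrite /prefix_weight E_det // blank_from_set_cell.
  by rewrite prod_step_weight_set_cell /= -/P !mulrA.
have [_ T_sum1] := T_distr c.1 c.2 (state w (time c)) (w.1 c.2).
by rewrite -mulr_sumr T_sum1 /prefix_weight blank_fromS -mulnb natrM -/P; ring.
Qed.

Lemma prob_ev_joint_prefix (E : pred Om) (t0 : nat) : (t0 <= k * n)%N ->
  prefix_determined t0 E -> prob_ev (joint mu m0 T) E = prob_ev (prefix_weight t0) E.
Proof.
move=> t0_le E_det.
have -> : prob_ev (joint mu m0 T) E = prob_ev (prefix_weight (k * n)) E.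
  by apply: eq_bigr => w _; rewrite prefix_weight_full.
have shift d : (t0 + d <= k * n)%N ->
    prob_ev (prefix_weight (t0 + d)) E = prob_ev (prefix_weight t0) E.
  elim: d => [|d IH] le_kn; first by rewrite addn0.
  have lt_kn : (t0 + d < k * n)%N by rewrite -addnS.
  by rewrite addnS (prob_ev_prefix_weightS E_det (leq_addr d t0) lt_kn) IH // ltnW.
by rewrite -(subnKC t0_le) shift ?subnKC.
Qed.

Lemma pr_eq_joint_prefix (t0 : nat) (T' : eqType) (f : Om -> T') :
  (t0 <= k * n)%N -> prefix_determined t0 f ->
  pr_eq (joint mu m0 T) f =1 pr_eq (prefix_weight t0) f.
Proof.
move=> t0_le f_det w; apply: prob_ev_joint_prefix => // w' c v le_c.
by rewrite f_det.
Qed.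

Lemma joint_sum1 : \sum_w joint mu m0 T w = 1.
Proof.
have := @prob_ev_joint_prefix xpredT 0 (leq0n _) (fun _ _ _ _ => erefl).
rewrite /prob_ev => ->.
pose blank : {ffun 'I_k -> {ffun 'I_n -> St}} := [ffun _ => [ffun _ => m0]].
rewrite (eq_bigr (fun w : Om => (w.2 == blank)%:R * stream_weight w)); last first.
  move=> w _; rewrite /prefix_weight big_pred0 ?mulr1 //.
  congr ((nat_of_bool _)%:R * _); apply/idP/eqP => [/forallP blank_w|w_blank].
    apply/ffunP => a; apply/ffunP => b; rewrite !ffunE.
    by apply/eqP; exact: (implyP (blank_w (a, b)) (leq0n _)).
  by apply/forallP => c; rewrite w_blank !ffunE eqxx implybT.
rewrite -(pair_big xpredT xpredT (fun x m => (m == blank)%:R * stream_weight (x, m))) /=.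
rewrite (eq_bigr (fun x => stream_weight (x, blank))); last first.
  move=> x _; rewrite (bigD1 blank) //= eqxx mul1r big1 ?addr0 // => m m_blank.
  by rewrite (negbTE m_blank) mul0r.
rewrite /stream_weight /= -(bigA_distr_bigA (fun j x => mu j x)) /=.
by apply: big1 => j _; case: (mu_distr j).
Qed.

Lemma prefix_determined_pair (T1 T2 : Type) (t0 : nat) (F : Om -> T1) (G : Om -> T2) :
  prefix_determined t0 F -> prefix_determined t0 G ->
  prefix_determined t0 (fun w => (F w, G w)).
Proof. by move=> F_det G_det w c v le_c; rewrite F_det ?G_det. Qed.

Section Splice.
Variables (Xmid Smid : pred nat).

Definition splice (w1 w2 : Om) : Om :=
  ([ffun b : 'I_n => if Xmid b then w1.1 b else w2.1 b],
   [ffun a => [ffun b => if Smid (time (a, b)).+1 then w1.2 a b else w2.2 a b]]).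

Lemma splice_stream w1 w2 b : (splice w1 w2).1 b = if Xmid b then w1.1 b else w2.1 b.
Proof. by rewrite ffunE. Qed.

Lemma state_splice w1 w2 t :
  state (splice w1 w2) t = if Smid t then state w1 t else state w2 t.
Proof.
case: t => [|t]; rewrite /state /=; first by case: (Smid 0).
case: insubP => [a _ a_t|]; last by case: (Smid _).
case: insubP => [b _ b_t|]; last by case: (Smid _).
by rewrite !ffunE /time /= a_t b_t -divn_eq.
Qed.

Lemma spliceK w1 w2 : splice (splice w1 w2) (splice w2 w1) = w1.
Proof.
case: w1 w2 => [x1 m1] [x2 m2]; congr (_, _).
  by apply/ffunP => b; rewrite !ffunE; case: (Xmid b).
apply/ffunP => a; rewrite !ffunE; apply/ffunP => b; rewrite !ffunE.
by case: (Smid _).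
Qed.

Definition fixed_by (TC : Type) (C : Om -> TC) (t : nat) : Prop :=
  forall w1 w2, C w1 = C w2 -> state w1 t = state w2 t.

(* Every step before [t0] lies wholly on the [w1] side or wholly on the [w2]
   side of the splice, up to states that are fixed by [C]; nothing after [t0]
   is taken from [w1]. *)
Definition splits_steps (TC : Type) (C : Om -> TC) (t0 : nat) : Prop :=
  (forall t, (t0 < t)%N -> ~~ Smid t) /\
  forall c : cell, (time c < t0)%N ->
    [/\ Xmid c.2, Smid (time c) \/ fixed_by C (time c)
      & Smid (time c).+1 \/ fixed_by C (time c).+1] \/
    [/\ ~~ Xmid c.2, ~~ Smid (time c) & ~~ Smid (time c).+1].

Lemma step_weight_congr c w w' :
  state w (time c) = state w' (time c) -> state w (time c).+1 = state w' (time c).+1 ->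
  w.1 c.2 = w'.1 c.2 -> step_weight c w = step_weight c w'.
Proof. by rewrite /step_weight => -> -> ->. Qed.

Lemma stream_weight_splice w1 w2 :
  stream_weight (splice w1 w2) * stream_weight (splice w2 w1) =
  stream_weight w1 * stream_weight w2.
Proof.
rewrite /stream_weight -!big_split /=; apply: eq_bigr => j _.
by rewrite !splice_stream; case: (Xmid j); rewrite // mulrC.
Qed.

Lemma blank_from_splice t0 w1 w2 : (forall t, (t0 < t)%N -> ~~ Smid t) ->
  blank_from t0 (splice w1 w2) = blank_from t0 w2.
Proof.
move=> after_t0; apply: eq_forallb => c; case: leqP => //= le_c.
by rewrite !ffunE (negbTE (after_t0 _ _)).
Qed.

Lemma prefix_weight_splice (TC : Type) (C : Om -> TC) (t0 : nat) :
  splits_steps C t0 -> forall w1 w2, C w1 = C w2 ->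
  prefix_weight t0 w1 * prefix_weight t0 w2 =
  prefix_weight t0 (splice w1 w2) * prefix_weight t0 (splice w2 w1).
Proof.
move=> [after_t0 steps] w1 w2 C12.
have state_l t : Smid t \/ fixed_by C t ->
    state (splice w1 w2) t = state w1 t /\ state (splice w2 w1) t = state w2 t.
  by rewrite !state_splice; case: (boolP (Smid t)) => // _ [//|fixed]; rewrite (fixed _ _ C12).
have state_r t : ~~ Smid t ->
    state (splice w1 w2) t = state w2 t /\ state (splice w2 w1) t = state w1 t.
  by rewrite !state_splice => /negbTE ->.
pose P w := \prod_(c : cell | (time c < t0)%N) step_weight c w.
have steps_splice : P (splice w1 w2) * P (splice w2 w1) = P w1 * P w2.
  rewrite -!big_split /=; apply: eq_bigr => c /steps [[X1 S1 S2]|[X1 S1 S2]].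
    have [e1 e1'] := state_l _ S1; have [e2 e2'] := state_l _ S2.
    by rewrite (step_weight_congr e1 e2) ?(step_weight_congr e1' e2') ?splice_stream ?X1.
  have [e1 e1'] := state_r _ S1; have [e2 e2'] := state_r _ S2.
  rewrite (step_weight_congr e1 e2) ?(step_weight_congr e1' e2') ?splice_stream ?(negbTE X1) //.
  by rewrite mulrC.
rewrite /prefix_weight !blank_from_splice // -/(P w1) -/(P w2).
rewrite -/(P (splice w1 w2)) -/(P (splice w2 w1)).
transitivity ((blank_from t0 w2)%:R * (blank_from t0 w1)%:R *
  (stream_weight (splice w1 w2) * stream_weight (splice w2 w1)) *
  (P (splice w1 w2) * P (splice w2 w1))); last by ring.
by rewrite stream_weight_splice steps_splice; ring.
Qed.

End Splice.

Lemma cond_indep_joint (TF TD TC : eqType) (F : Om -> TF) (D : Om -> TD) (C : Om -> TC)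
    (Xmid Smid : pred nat) (t0 : nat) :
  (t0 <= k * n)%N -> splits_steps Xmid Smid C t0 ->
  prefix_determined t0 F -> prefix_determined t0 D -> prefix_determined t0 C ->
  (forall w1 w2, C w1 = C w2 -> [/\ F (splice Xmid Smid w1 w2) = F w1,
     D (splice Xmid Smid w1 w2) = D w2 & C (splice Xmid Smid w1 w2) = C w1]) ->
  cond_indep (joint mu m0 T) F D C.
Proof.
move=> t0_le split_t0 F_det D_det C_det splice_FDC w.
rewrite !(pr_eq_joint_prefix t0_le) //; try by repeat apply: prefix_determined_pair.
apply: (cond_indep_swap (swap := splice Xmid Smid)) => w1 w2 C12; have [F1 D2 C1] := splice_FDC w1 w2 C12.
by split => //; [exact: spliceK | exact: prefix_weight_splice split_t0 w1 w2 C12].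
Qed.

Lemma Mle_eq_state w1 w2 i j : Mle m0 w1 i j = Mle m0 w2 i j ->
  forall a, (a < i)%N -> state w1 (a * n + j) = state w2 (a * n + j).
Proof.
rewrite !Mle_state => e a a_lt.
have := congr1 (fun s => nth m0 s a) e.
by rewrite /= !(nth_map 0) ?size_iota // nth_iota.
Qed.

Lemma eq_Mle w1 w2 i j :
  (forall a, (a < i)%N -> state w1 (a * n + j) = state w2 (a * n + j)) ->
  Mle m0 w1 i j = Mle m0 w2 i j.
Proof.
move=> e; rewrite !Mle_state; apply/eq_in_map => i'; rewrite mem_iota.
by case: i' => // i' /andP[_]; rewrite add1n ltnS; apply: e.
Qed.

Lemma Mle_prefix_determined (i j t0 : nat) :
  (forall a, (a < i)%N -> (a * n + j <= t0)%N) ->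
  prefix_determined t0 (fun w => Mle m0 w i j).
Proof.
move=> le_t0 w c v le_c; apply: eq_Mle => a a_lt; apply: state_set_cell_le.
exact: leq_trans (le_t0 a a_lt) le_c.
Qed.

Lemma Mle_splice_r Xmid Smid w1 w2 i j :
  (forall a, (a < i)%N -> ~~ Smid (a * n + j)%N) ->
  Mle m0 (splice Xmid Smid w1 w2) i j = Mle m0 w2 i j.
Proof. by move=> out; apply: eq_Mle => a a_lt; rewrite state_splice (negbTE (out a a_lt)). Qed.

Lemma Mle_splice_eq Xmid Smid w1 w2 i j :
  Mle m0 w1 i j = Mle m0 w2 i j -> Mle m0 (splice Xmid Smid w1 w2) i j = Mle m0 w1 i j.
Proof.
move=> e; apply: eq_Mle => a a_lt; rewrite state_splice.
by case: (Smid _); rewrite // (Mle_eq_state e a_lt).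
Qed.

Definition post_time (mc : nat -> nat -> bool) (t : nat) : bool :=
  (0 < t)%N && mc (t.-1 %/ n)%N (t.-1 %% n)%N.

Lemma post_time_cell mc (a b : nat) : (b < n)%N -> post_time mc (a * n + b).+1 = mc a b.
Proof. by move=> b_lt; rewrite /post_time /=; have [-> ->] := cell_divmod a b_lt. Qed.

Lemma post_timeP mc (a b : nat) (P : bool -> Prop) : (b < n)%N ->
  ((0 < b)%N -> P (mc a b.-1)) -> (b = 0%N -> (0 < a)%N -> P (mc a.-1 n.-1)) ->
  ((a * n + b = 0)%N -> P false) -> P (post_time mc (a * n + b)).
Proof.
case: b => [|b] b_lt Pb Pa P0; last first.
  by rewrite addnS post_time_cell; [apply: Pb | apply: ltnW].
case: a Pa P0 {Pb} => [|a] Pa P0; first exact: P0.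
have -> : (a.+1 * n + 0 = (a * n + n.-1).+1)%N by rewrite addn0 -addnS prednK // mulSnr.
by rewrite post_time_cell ?ltn_predL //; apply: Pa.
Qed.

Definition elem (w : Om) (b : nat) : option X :=
  if @insub _ (fun b => (b < n)%N) 'I_n b is Some b' then Some (w.1 b') else None.

Lemma elem_ord w (b : 'I_n) : elem w b = Some (w.1 b).
Proof. by rewrite /elem; case: insubP => [b' _ /val_inj->|]; last by rewrite ltn_ord. Qed.

Lemma elem_splice Xmid Smid w1 w2 b :
  elem (splice Xmid Smid w1 w2) b = if Xmid b then elem w1 b else elem w2 b.
Proof. by rewrite /elem; case: insubP => [b' _ <-|]; rewrite ?ffunE; case: (Xmid _). Qed.

Lemma log2_card_state : log2 #|{: St}|%:R = s%:R :> R.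
Proof. by rewrite card_tuple card_bool log2_natX2. Qed.


Lemma cmi_joint_extend (TA TB TC TD : eqType) (A : Om -> TA) (B : Om -> TB)
    (C : Om -> TC) (D : Om -> TD) (Xmid Smid : pred nat) (t0 : nat) :
  (t0 <= k * n)%N -> splits_steps Xmid Smid C t0 ->
  prefix_determined t0 A -> prefix_determined t0 B ->
  prefix_determined t0 C -> prefix_determined t0 D ->
  (forall w1 w2, C w1 = C w2 ->
     [/\ A (splice Xmid Smid w1 w2) = A w1, B (splice Xmid Smid w1 w2) = B w1,
         C (splice Xmid Smid w1 w2) = C w1 & D (splice Xmid Smid w1 w2) = D w2]) ->
  cmi (joint mu m0 T) A B C = cmi (joint mu m0 T) A B (fun w => (C w, D w)).
Proof.
move=> t0_le split_t0 A_det B_det C_det D_det splice_ABCD.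
apply: (cmi_cond_indep joint_ge0); apply: (cond_indep_joint t0_le split_t0) => //;
  try exact: prefix_determined_pair.
all: by move=> w1 w2 /splice_ABCD[A1 B1 C1 D2]; split => /=; rewrite ?A1 ?B1 ?C1 ?D2.
Qed.

Section Window.
Variables (i0 : 'I_k) (j0 : 'I_n).

Definition M_ij (w : Om) : St := Mst m0 w i0.+1 j0.+1.

(* With r = i0+1 (resp. r = i0), [past_cond r l] is the conditioning of the
   l-th term of the first (resp. second) sum of MIC; [past_block r lo l] holds
   the stream elements and the states M_(<=r, b) for lo <= b < l. *)
Definition past_cond (r l : nat) (w : Om) := (Mle m0 w r l, Mle m0 w i0 j0.+1).

Definition past_block (r lo l : nat) (w : Om) :=
  ([seq elem w b | b <- iota lo (l - lo)], [seq Mle m0 w r b | b <- iota lo (l - lo)]).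

Lemma sum_cmi_window (r lo hi : nat) : (lo <= hi)%N ->
  (forall l, (lo <= l < hi)%N ->
     cmi (joint mu m0 T) M_ij (elem^~ l) (past_cond r l) =
     cmi (joint mu m0 T) M_ij (elem^~ l) (fun w => (past_cond r l w, past_block r lo l w))) ->
  \sum_(lo <= l < hi) cmi (joint mu m0 T) M_ij (elem^~ l) (past_cond r l) <= s%:R.
Proof.
move=> lo_hi extend; rewrite big_nat (eq_bigr _ extend) -big_nat -log2_card_state.
apply: (sum_cmi_le_log2_card joint_ge0 joint_sum1 M_ij (M := fun l w => Mle m0 w r l.+1)) => //.
move=> l /andP[lo_l _] w w'; rewrite /past_cond /past_block.
have -> : iota lo (l.+1 - lo) = rcons (iota lo (l - lo)) l.
  by rewrite subSn // -addn1 iotaD subnKC // cats1.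
rewrite !map_rcons !xpair_eqE !eqseq_rcons.
move: (Mle m0 w' r l.+1 == _) (Mle m0 w' i0 j0.+1 == _) ([seq elem w' b | b <- _] == _)
  (elem w' l == _) ([seq Mle m0 w' r b | b <- _] == _) (Mle m0 w' r l == _).
by do 6!case.
Qed.

Definition t_ij : nat := (i0 * n + j0).+1.

Lemma t_ij_le : (t_ij <= k * n)%N.
Proof. by have := time_lt (i0, j0). Qed.

Lemma M_ij_prefix_determined : prefix_determined t_ij M_ij.
Proof. by move=> w c v le_c; rewrite /M_ij !Mst_state /= addnS state_set_cell_le. Qed.

Lemma M_ij_splice (Xmid Smid : pred nat) w1 w2 :
  Smid t_ij -> M_ij (splice Xmid Smid w1 w2) = M_ij w1.
Proof. by move=> S_t; rewrite /M_ij !Mst_state /= addnS state_splice S_t. Qed.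

Lemma past_condP r l w1 w2 : past_cond r l w1 = past_cond r l w2 ->
  Mle m0 w1 r l = Mle m0 w2 r l /\ Mle m0 w1 i0 j0.+1 = Mle m0 w2 i0 j0.+1.
Proof. by move=> e; split; [exact: (congr1 fst e) | exact: (congr1 snd e)]. Qed.

Lemma past_cond_prefix_determined r l :
  (forall a, (a < r)%N -> (a * n + l <= t_ij)%N) -> prefix_determined t_ij (past_cond r l).
Proof.
move=> le_t; apply: prefix_determined_pair; first exact: Mle_prefix_determined.
by apply: Mle_prefix_determined => a a_lt; rewrite /t_ij; nia.
Qed.

Lemma past_block_prefix_determined r lo l :
  (forall a b, (a < r)%N -> (b < l)%N -> (a * n + b <= t_ij)%N) ->
  prefix_determined t_ij (past_block r lo l).
Proof.
move=> le_t w c v le_c; congr (_, _); apply/eq_in_map => b; rewrite mem_iota => /andP[lo_b lt_b].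
by move: le_c; apply: Mle_prefix_determined => a a_lt; apply: le_t; lia.
Qed.

Lemma past_cond_splice (Xmid Smid : pred nat) r l w1 w2 :
  past_cond r l w1 = past_cond r l w2 ->
  past_cond r l (splice Xmid Smid w1 w2) = past_cond r l w1.
Proof. by case/past_condP=> e1 e2; rewrite /past_cond !Mle_splice_eq. Qed.

Lemma post_time_after mc :
  (forall a b, (b < n)%N -> (i0 < a)%N || (i0 == a :> nat) && (j0 < b)%N -> ~~ mc a b) ->
  forall t, (t_ij < t)%N -> ~~ post_time mc t.
Proof.
move=> late [//|t] lt_t; rewrite /post_time /=.
have n_gt0 : (0 < n)%N by apply: leq_ltn_trans (ltn_ord j0).
apply: late; first exact: ltn_pmod.
by rewrite -(@ltn_time n) ?ltn_pmod // -divn_eq.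
Qed.

Lemma before_t_ij (a b : nat) : (b < n)%N -> (a * n + b < t_ij)%N ->
  (a < i0)%N || (a == i0 :> nat) && (b <= j0)%N.
Proof.
by move=> b_lt; rewrite /t_ij ltnS leqNgt ltn_time // negb_or negb_and -leqNgt; lia.
Qed.

Section FirstSum.
Variable l : nat.
Hypothesis l_le : (l <= j0)%N.

(* The [w1] side of the splice is the block of positions [l, j0] in the first
   i0+1 passes. *)
Definition Xmid1 : pred nat := fun b => (l <= b <= j0)%N.
Definition mc1 (a b : nat) : bool :=
  ((a == i0) && (l <= b <= j0) || (a < i0) && (l <= b < j0))%N.
Definition Smid1 : pred nat := post_time mc1.

Lemma splits_steps1 : splits_steps Xmid1 Smid1 (past_cond i0.+1 l) t_ij.
Proof.
split=> [|[a b]]; first by apply: post_time_after => a b _; rewrite /mc1; lia.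
rewrite /time /= => /(before_t_ij (ltn_ord b)) early.
have b_lt := ltn_ord b; have j0_lt := ltn_ord j0.
case: (ltnP b l) => [b_l|l_b].
  right; split; first by rewrite /Xmid1; lia.
    by apply: (@post_timeP _ _ _ (fun x => ~~ x)) => // *; rewrite /mc1; lia.
  by rewrite /Smid1 post_time_cell // /mc1; lia.
case: (leqP b j0) => [b_j|j_b]; last first.
  right; split; first by rewrite /Xmid1; lia.
    by apply: (@post_timeP _ _ _ (fun x => ~~ x)) => // *; rewrite /mc1; lia.
  by rewrite /Smid1 post_time_cell // /mc1; lia.
left; split; first by rewrite /Xmid1; lia.
  have [l_lt_b|l_eq_b] : (l < b)%N \/ l = b by lia.
    by left; apply: (@post_timeP _ _ _ id) => // *; rewrite /mc1; lia.
  by right=> w1 w2 /past_condP[e1 _]; rewrite -l_eq_b; apply: (Mle_eq_state e1); lia.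
case: (boolP ((a < i0)%N && (b == j0 :> nat))) => [/andP[a_i /eqP b_j0]|not_last].
  by right=> w1 w2 /past_condP[_ e2]; rewrite -addnS b_j0; apply: (Mle_eq_state e2).
by left; rewrite /Smid1 post_time_cell // /mc1; lia.
Qed.

Lemma cmi_window1 :
  cmi (joint mu m0 T) M_ij (elem^~ l) (past_cond i0.+1 l) =
  cmi (joint mu m0 T) M_ij (elem^~ l) (fun w => (past_cond i0.+1 l w, past_block i0.+1 0 l w)).
Proof.
have j0_lt := ltn_ord j0.
apply: (cmi_joint_extend t_ij_le splits_steps1) => //.
- exact: M_ij_prefix_determined.
- by apply: past_cond_prefix_determined => a a_lt; rewrite /t_ij; nia.
- by apply: past_block_prefix_determined => a b a_lt b_lt; rewrite /t_ij; nia.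
move=> w1 w2 C12; split.
- by rewrite M_ij_splice // /Smid1 /t_ij post_time_cell // /mc1 eqxx leqnn l_le.
- by rewrite elem_splice /Xmid1 leqnn l_le.
- exact: past_cond_splice.
rewrite /past_block; congr (_, _); apply/eq_in_map => b; rewrite mem_iota => /andP[_ b_lt].
  by rewrite elem_splice /Xmid1; case: ifP => //; lia.
apply: Mle_splice_r => a a_lt.
by apply: (@post_timeP _ _ _ (fun x => ~~ x)) => // *; rewrite /mc1; lia.
Qed.

End FirstSum.

Section SecondSum.
Variable l : nat.
Hypotheses (j0_l : (j0 < l)%N) (l_lt : (l < n)%N).

(* The [w1] side of the splice is everything outside the positions (j0, l) in
   the first i0 passes, together with pass i0+1 up to position j0. *)
Definition Xmid2 : pred nat := fun b => (l <= b)%N || (b <= j0)%N.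
Definition mc2 (a b : nat) : bool :=
  ((a < i0) && ((l <= b) || (b < j0)) || (a == i0) && (b <= j0))%N.
Definition Smid2 : pred nat := post_time mc2.

Lemma splits_steps2 : splits_steps Xmid2 Smid2 (past_cond i0 l) t_ij.
Proof.
split=> [|[a b]]; first by apply: post_time_after => a b _; rewrite /mc2; lia.
rewrite /time /= => /(before_t_ij (ltn_ord b)) early.
have b_lt := ltn_ord b; have j0_lt := ltn_ord j0.
case: (boolP ((a < i0)%N && (j0 < b < l)%N)) => [mid|not_mid].
  right; split; first by rewrite /Xmid2; lia.
    by apply: (@post_timeP _ _ _ (fun x => ~~ x)) => // *; rewrite /mc2; lia.
  by rewrite /Smid2 post_time_cell // /mc2; lia.
left; split; first by rewrite /Xmid2; lia.
  case: (boolP ((a < i0)%N && (b == l :> nat))) => [/andP[a_i /eqP b_l]|not_l].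
    by right=> w1 w2 /past_condP[e1 _]; rewrite b_l; apply: (Mle_eq_state e1).
  pose P x := x \/ fixed_by (past_cond i0 l) (a * n + b).
  apply: (@post_timeP _ _ _ P) => //; try by move=> *; left; rewrite /mc2; lia.
  by move=> t0; right=> w1 w2 _; rewrite t0.
case: (boolP ((a < i0)%N && (b == j0 :> nat))) => [/andP[a_i /eqP b_j0]|not_last].
  by right=> w1 w2 /past_condP[_ e2]; rewrite -addnS b_j0; apply: (Mle_eq_state e2).
by left; rewrite /Smid2 post_time_cell // /mc2; lia.
Qed.

Lemma cmi_window2 :
  cmi (joint mu m0 T) M_ij (elem^~ l) (past_cond i0 l) =
  cmi (joint mu m0 T) M_ij (elem^~ l) (fun w => (past_cond i0 l w, past_block i0 j0.+1 l w)).
Proof.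
have j0_lt := ltn_ord j0.
apply: (cmi_joint_extend t_ij_le splits_steps2) => //.
- exact: M_ij_prefix_determined.
- by apply: past_cond_prefix_determined => a a_lt; rewrite /t_ij; nia.
- by apply: past_block_prefix_determined => a b a_lt b_lt; rewrite /t_ij; nia.
move=> w1 w2 C12; split.
- by rewrite M_ij_splice // /Smid2 /t_ij post_time_cell // /mc2 eqxx leqnn orbT.
- by rewrite elem_splice /Xmid2 leqnn.
- exact: past_cond_splice.
rewrite /past_block; congr (_, _); apply/eq_in_map => b; rewrite mem_iota => /andP[j0_b b_lt].
  by rewrite elem_splice /Xmid2; case: ifP => //; lia.
apply: Mle_splice_r => a a_lt.
by apply: (@post_timeP _ _ _ (fun x => ~~ x)) => // *; rewrite /mc2; lia.
Qed.

End SecondSum.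
End Window.

Lemma cmi_Xel (TA TC : eqType) (A : Om -> TA) (C : Om -> TC) (l0 : 'I_n) :
  cmi (joint mu m0 T) A (Xel l0) C = cmi (joint mu m0 T) A (elem^~ l0) C.
Proof. by apply: (eq_cmi joint_ge0) => // w w'; rewrite !elem_ord. Qed.

Lemma sum_cmi_first (i0 : 'I_k) (j0 : 'I_n) :
  \sum_(l0 < n | (l0 <= j0)%N) cmi (joint mu m0 T) (fun w => Mst m0 w i0.+1 j0.+1) (Xel l0)
     (fun w => (Mle m0 w i0.+1 l0, Mle m0 w i0 j0.+1)) <= s%:R.
Proof.
rewrite (eq_bigl (fun l0 : 'I_n => 0 <= l0 < j0.+1)%N) => [|l0]; last by rewrite ltnS.
rewrite (eq_bigr _ (fun l0 _ => cmi_Xel _ _ l0)).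
rewrite (big_ord_mid _ _ (fun l => cmi (joint mu m0 T) (M_ij i0 j0) (elem^~ l)
                                   (past_cond i0 j0 i0.+1 l))) ?ltn_ord //.
apply: sum_cmi_window => // l /andP[_ l_le]; exact: cmi_window1.
Qed.

Lemma sum_cmi_second (i0 : 'I_k) (j0 : 'I_n) :
  \sum_(l0 < n | (j0 < l0)%N) cmi (joint mu m0 T) (fun w => Mst m0 w i0.+1 j0.+1) (Xel l0)
     (fun w => (Mle m0 w i0 l0, Mle m0 w i0 j0.+1)) <= s%:R.
Proof.
rewrite (eq_bigl (fun l0 : 'I_n => j0.+1 <= l0 < n)%N) => [|l0]; last by rewrite ltn_ord andbT.
rewrite (eq_bigr _ (fun l0 _ => cmi_Xel _ _ l0)).
rewrite (big_ord_mid _ _ (fun l => cmi (joint mu m0 T) (M_ij i0 j0) (elem^~ l)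
                                   (past_cond i0 j0 i0 l))) //.
apply: sum_cmi_window => [|l /andP[j0_l l_lt]]; [exact: ltn_ord | exact: cmi_window2].
Qed.

End Model.

Theorem lemma1p1 (R : realType) (X : finType) (n k s : nat)
    (mu : 'I_n -> {ffun X -> R})
    (m0 : s.-tuple bool)
    (T : 'I_k -> 'I_n -> s.-tuple bool -> X -> {ffun s.-tuple bool -> R}) :
  (forall j, is_distr (mu j)) ->
  (forall i j st x, is_distr (T i j st x)) ->
  MIC mu m0 T <= (2 * k * s * n)%:R.
Proof.
move=> mu_distr T_distr; rewrite /MIC.
apply: (@le_trans _ _ (\sum_(i0 < k) \sum_(j0 < n) s%:R + \sum_(i0 < k) \sum_(j0 < n) s%:R)).
  apply: lerD; apply: ler_sum => i0 _; apply: ler_sum => j0 _.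
    exact: sum_cmi_first.
  exact: sum_cmi_second.
by rewrite !sumr_const !card_ord -!mulrnA -natrD ler_nat; nia.
Qed.
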